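(* Let $\alpha$ be an ordinal and let $\mathcal{X}=\{X_a\}_{a\in J}$ be a family of metric spaces. Suppose that for every real $r>0$ each $X_a$ can be written as an $r$-disjoint union $X_a=\bigcup_i X_a^i$ (i.e. $\{X_a^i\}_i$ is $r$-disjoint) in such a way that the family $\{X_a^i\}_{i,a}$ belongs to $\mathfrak{C}_\alpha$. Then $\mathcal{X}\in\mathfrak{C}_{\alpha+1}$.
   Context: A family $\mathcal{U}$ of metric subspaces of a metric space $(X,d)$ is $r$-disjoint if $d(x,y)>r$ whenever $x\in U$, $y\in U'$, $U\neq U'$ in $\mathcal{U}$. For families $\mathcal{X},\mathcal{Y}$ and $R\in\mathbb{R}^{\mathbb{N}}$, $\mathcal{X}\xrightarrow{R}\mathcal{Y}$ means: there is an integer $k$ such that for each $X\in\mathcal{X}$ there are subcollections $\mathcal{U}_1,\dots,\mathcal{U}_k\subseteq\mathcal{Y}$ of subspaces of $X$, each $\mathcal{U}_i$ being $R_i$-disjoint, with $\bigcup_i\mathcal{U}_i$ covering $X$. A family is bounded if the diameters of its members are uniformly bounded. $\mathfrak{C}_0$ is the class of bounded families; for an ordinal $\alpha>0$, $\mathfrak{C}_\alpha$ is the class of families $\mathcal{X}$ such that for every $R\in\mathbb{R}^{\mathbb{N}}$ there exist $\beta<\alpha$ and $\mathcal{Y}\in\mathfrak{C}_\beta$ with $\mathcal{X}\xrightarrow{R}\mathcal{Y}$. All subspaces carry the induced metric. *)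

From Stdlib Require Import Reals Relations.
Open Scope R_scope.

(* Ambient metric space (T, d); metric spaces in families are subsets of T
   with the induced metric.  A "sfamily" is a set of subsets of T. *)
Definition sfamily (T : Type) := (T -> Prop) -> Prop.

Definition is_metric {T : Type} (d : T -> T -> R) : Prop :=
  (forall x y, 0 <= d x y) /\
  (forall x y, d x y = 0 <-> x = y) /\
  (forall x y, d x y = d y x) /\
  (forall x y z, d x z <= d x y + d y z).

Definition r_disjoint {T : Type} (d : T -> T -> R) (r : R) (U : sfamily T) : Prop :=
  forall A B x y, U A -> U B -> A <> B -> A x -> B y -> d x y > r.

Definition bounded_family {T : Type} (d : T -> T -> R) (X : sfamily T) : Prop :=
  exists D : R, forall A x y, X A -> A x -> A y -> d x y <= D.

(* X -R-> Y : R_1, R_2, ... is indexed by i >= 1 *)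
Definition arrow {T : Type} (d : T -> T -> R) (Rs : nat -> R)
    (X Y : sfamily T) : Prop :=
  exists k : nat, forall A, X A ->
    exists U : nat -> sfamily T,
      (forall i, (1 <= i <= k)%nat ->
          (forall V, U i V -> Y V /\ (forall x, V x -> A x)) /\
          r_disjoint d (Rs i) (U i)) /\
      (forall x, A x -> exists i, (1 <= i <= k)%nat /\ exists V, U i V /\ V x).

(* Ordinals are modelled by the elements of a strict well-order (O, lt). *)
Definition is_zero {O : Type} (lt : O -> O -> Prop) (a : O) : Prop :=
  forall b, ~ lt b a.

Definition is_succ {O : Type} (lt : O -> O -> Prop) (a s : O) : Prop :=
  lt a s /\ forall b, lt b s -> b = a \/ lt b a.

Definition strict_well_order {O : Type} (lt : O -> O -> Prop) : Prop :=
  well_founded lt /\ (forall a, ~ lt a a) /\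
  (forall a b c, lt a b -> lt b c -> lt a c) /\
  (forall a b, lt a b \/ a = b \/ lt b a).

(* inC d lt a X  :  X belongs to the class C_a (transfinite recursion,
   realised as an inductive predicate; lt is well-founded). *)
Inductive inC {T O : Type} (d : T -> T -> R) (lt : O -> O -> Prop)
  : O -> sfamily T -> Prop :=
| inC_zero : forall a X, is_zero lt a -> bounded_family d X -> inC d lt a X
| inC_pos : forall a X, ~ is_zero lt a ->
    (forall Rs : nat -> R, exists b, lt b a /\
        exists Y, inC d lt b Y /\ arrow d Rs X Y) ->
    inC d lt a X.

(* Given R, choose r > max(0, R_1).  The r-disjoint decompositions {X_a^i}_i
   are then R_1-disjoint, so a single colour (k = 1) witnesses
   X -R-> {X_a^i}_{i,a}, a family of class C_alpha with alpha < alpha + 1. *)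

From Stdlib Require Import Reals Lra Lia.
Open Scope R_scope.

Lemma r_disjoint_le {T : Type} (d : T -> T -> R) (r s : R) (U : sfamily T) :
  r <= s -> r_disjoint d s U -> r_disjoint d r U.
Proof.
  intros Hrs HU A B x y HA HB HAB Hx Hy.
  specialize (HU A B x y HA HB HAB Hx Hy).
  lra.
Qed.

Lemma arrow_of_disjoint_covers {T : Type} (d : T -> T -> R) (Rs : nat -> R)
    (X Y : sfamily T) :
  (forall A, X A -> exists U : sfamily T,
      r_disjoint d (Rs 1%nat) U /\
      (forall V, U V -> Y V /\ (forall x, V x -> A x)) /\
      (forall x, A x -> exists V, U V /\ V x)) ->
  arrow d Rs X Y.
Proof.
  intros Hcov.
  exists 1%nat.
  intros A HA.
  destruct (Hcov A HA) as [U [Hdisj [Hsub Hcover]]].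
  exists (fun _ => U).
  split.
  - intros i Hi.
    assert (i = 1%nat) as -> by lia.
    split; assumption.
  - intros x Hx.
    exists 1%nat.
    split; [lia | exact (Hcover x Hx)].
Qed.

Lemma is_succ_not_zero {O : Type} (lt : O -> O -> Prop) (a s : O) :
  is_succ lt a s -> ~ is_zero lt s.
Proof.
  intros [Has _] Hzero.
  exact (Hzero a Has).
Qed.

Theorem mainTheorem12 (T : Type) (d : T -> T -> R) (O : Type)
  (lt : O -> O -> Prop) (alpha alpha1 : O) (J : Type) (X : J -> T -> Prop) :
  is_metric d ->
  strict_well_order lt ->
  is_succ lt alpha alpha1 ->
  (forall r : R, r > 0 ->
     exists P : J -> sfamily T,
       (forall a, r_disjoint d r (P a) /\
          (forall x, X a x <-> exists V, P a V /\ V x)) /\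
       inC d lt alpha (fun V => exists a, P a V)) ->
  inC d lt alpha1 (fun A => exists a, A = X a).
Proof.
  intros _ _ Hsucc Hdecomp.
  apply inC_pos; [exact (is_succ_not_zero lt alpha alpha1 Hsucc) |].
  intros Rs.
  assert (Hr : Rabs (Rs 1%nat) + 1 > 0) by (pose proof (Rabs_pos (Rs 1%nat)); lra).
  destruct (Hdecomp _ Hr) as [P [HP HC]].
  exists alpha.
  split; [exact (proj1 Hsucc) |].
  exists (fun V => exists a, P a V).
  split; [exact HC |].
  apply arrow_of_disjoint_covers.
  intros A [a ->].
  destruct (HP a) as [Hdisj Hunion].
  exists (P a).
  split; [| split].
  - apply (r_disjoint_le d _ (Rabs (Rs 1%nat) + 1)); [| exact Hdisj].
    pose proof (Rle_abs (Rs 1%nat)); lra.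
  - intros V HV.
    split; [exists a; exact HV |].
    intros x Hx.
    apply Hunion; exists V; auto.
  - intros x Hx.
    exact (proj1 (Hunion x) Hx).
Qed.
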